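(* Let $\epsilon>0$. After $K=\tau\ln(\frac1\epsilon)$ iterations of Dual KOSZ starting from $\mathbf x^0=0$, we have $\mathcal B(\mathbf x^* )-\mathbb E[\mathcal B(\mathbf x^K)]\le\epsilon\cdot\mathcal B(\mathbf x^* )$.
   Context: $G=(V,E)$ is a connected undirected graph with resistances $r(e)>0$; $\mathbf b\in\mathbb R^V$ with $\sum_ib(i)=0$; $\mathbf L=\sum_{ij\in E}\frac1{r(i,j)}(\mathbf e_i-\mathbf e_j)(\mathbf e_i-\mathbf e_j)^\top$, $\mathcal B(\mathbf x)=\mathbf b^\top\mathbf x-\frac12\mathbf x^\top\mathbf L\mathbf x$, $\mathbf x^*$ maximizes $\mathcal B$. $T$ is a rooted spanning tree with edges directed toward the root; $C(i,j)$ is the vertex set of the component of $T-ij$ containing $i$; $R(C)=(\sum_{e\in\delta(C)}1/r(e))^{-1}$, $b(C)=\sum_{v\in C}b(v)$, $f_{\mathbf x}(C)=\sum_{kl\in E,k\in C,l\notin C}\frac{x(k)-x(l)}{r(k,l)}$; $\tau=\sum_{(i,j)\in T}\frac{r(i,j)}{R(C(i,j))}$. Dual KOSZ: $\mathbf x^0=0$; each iteration independently samples a tree edge $(i,j)$ with probability $\frac1\tau\frac{r(i,j)}{R(C(i,j))}$, and with $C=C(i,j)$ sets $\mathbf x^{t+1}=\mathbf x^t+(b(C)-f_{\mathbf x^t}(C))R(C)\mathbbm 1_C$. *)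

From HB Require Import structures.
From mathcomp Require Import all_boot all_order all_algebra.
From mathcomp Require Import all_classical all_reals all_analysis.
Set Implicit Arguments. Unset Strict Implicit. Unset Printing Implicit Defensive.
Import Order.TTheory GRing.Theory Num.Theory.
Local Open Scope ring_scope.

Section Defs.
Variables (R : realType) (V : finType).
(* G = (V, E): E is a symmetric irreflexive relation; r k l = resistance of edge kl. *)
Variables (E : rel V) (r : V -> V -> R) (b : V -> R).
(* Rooted spanning tree T: every non-root vertex v has tree edge (v, parent v),
   directed toward the root. *)
Variables (root : V) (parent : V -> V).

(* B(x) = b^T x - 1/2 x^T L x, with x^T L x = sum over edges {k,l} of
   (x k - x l)^2 / r(k,l); summing over ordered pairs counts each edge twice. *)
Definition quadL (x : V -> R) : R :=
  (\sum_(k : V) \sum_(l : V | E k l) (x k - x l) ^+ 2 / r k l) / 2.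
Definition Bfun (x : V -> R) : R := \sum_(v : V) b v * x v - quadL x / 2.

Definition treeAdj (u w : V) : bool :=
  ((u != root) && (parent u == w)) || ((w != root) && (parent w == u)).

(* C(i,j): vertex set of the component of T - ij containing i *)
Definition compC (i j : V) : {set V} :=
  [set v | connect (fun u w => treeAdj u w &&
                     ~~ (((u == i) && (w == j)) || ((u == j) && (w == i)))) i v].

Definition RC (C : {set V}) : R :=
  (\sum_(k in C) \sum_(l in ~: C | E k l) (r k l)^-1)^-1.
Definition bC (C : {set V}) : R := \sum_(v in C) b v.
Definition fC (x : V -> R) (C : {set V}) : R :=
  \sum_(k in C) \sum_(l in ~: C | E k l) (x k - x l) / r k l.

Definition Ctree (i : V) : {set V} := compC i (parent i).

Definition tau : R :=
  \sum_(i : V | i != root) r i (parent i) / RC (Ctree i).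

Definition prob (i : V) : R := tau^-1 * (r i (parent i) / RC (Ctree i)).

Definition kosz_step (x : V -> R) (i : V) : V -> R :=
  let C := Ctree i in
  fun v => x v + (bC C - fC x C) * RC C * (if v \in C then 1 else 0).

(* expected value of B(x^n) after n independent iterations started at x *)
Fixpoint expB (n : nat) (x : V -> R) : R :=
  match n with
  | 0 => Bfun x
  | n'.+1 => \sum_(i : V | i != root) prob i * expB n' (kosz_step x i)
  end.
End Defs.

From HB Require Import structures.
From mathcomp Require Import all_boot all_order all_algebra.
From mathcomp Require Import all_classical all_reals all_analysis.
From mathcomp Require Import ring lra.
Import Order.TTheory GRing.Theory Num.Theory.
Local Open Scope ring_scope.

Set Implicit Arguments.
Unset Strict Implicit.
Unset Printing Implicit Defensive.

(* Let D_i(x) = b(C_i) - f_x(C_i) be the deficit of the cut of the tree edge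
   (i, parent i), and r_i the resistance of that edge.  The update along that
   edge is an exact line search in the direction 1_{C_i}, so it raises B by
   R(C_i) D_i(x)^2 / 2; since edge i is sampled with probability
   r_i / (tau R(C_i)), the expected gain is (1/tau) sum_i r_i D_i(x)^2 / 2.
   Conversely, any potential z differs from x by a constant plus
   sum_i (y_i - y_{parent i}) 1_{C_i}, where y = z - x; keeping only the tree
   edges in the energy of y and applying AM-GM edge by edge gives
   B(z) - B(x) <= sum_i r_i D_i(x)^2 / 2.  So every iteration contracts the
   expected optimality gap by 1 - 1/tau <= exp(-1/tau), and the gap starts at
   B(xstar) since B(0) = 0. *)

Definition indicator {R : ringType} {V : finType} (C : {set V}) (v : V) : R :=
  if v \in C then 1 else 0.

Section LaplacianForm.
Variables (R : realType) (V : finType) (E : rel V) (r : V -> V -> R).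
Hypothesis Esym : forall u v, E u v = E v u.
Hypothesis rsym : forall u v, E u v -> r u v = r v u.

Definition edge_sum (G : V -> V -> R) : R := \sum_k \sum_(l | E k l) G k l.

Lemma eq_edge_sum (G1 G2 : V -> V -> R) :
  (forall k l, E k l -> G1 k l = G2 k l) -> edge_sum G1 = edge_sum G2.
Proof. by move=> eqG; apply: eq_bigr => k _; apply: eq_bigr => l; apply: eqG. Qed.

Lemma edge_sum_swap (G : V -> V -> R) : edge_sum G = edge_sum (fun k l => G l k).
Proof.
rewrite /edge_sum; under eq_bigr do rewrite big_mkcond.
rewrite exchange_big; apply: eq_bigr => l _; rewrite [RHS]big_mkcond.
by apply: eq_bigr => k _; rewrite Esym.
Qed.

Lemma edge_sumD (G1 G2 : V -> V -> R) :
  edge_sum (fun k l => G1 k l + G2 k l) = edge_sum G1 + edge_sum G2.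
Proof. by rewrite /edge_sum -big_split; apply: eq_bigr => k _; rewrite big_split. Qed.

Lemma edge_sumZ (c : R) (G : V -> V -> R) :
  edge_sum (fun k l => c * G k l) = c * edge_sum G.
Proof. by rewrite /edge_sum mulr_sumr; apply: eq_bigr => k _; rewrite mulr_sumr. Qed.

Lemma edge_sum_sum (I : finType) (P : pred I) (G : I -> V -> V -> R) :
  edge_sum (fun k l => \sum_(i | P i) G i k l) = \sum_(i | P i) edge_sum (G i).
Proof. by rewrite /edge_sum exchange_big; apply: eq_bigr => k _; rewrite exchange_big. Qed.

Definition laplacian_form (x y : V -> R) : R :=
  edge_sum (fun k l => (x k - x l) * (y k - y l) / r k l) / 2.

Lemma quadLE (x : V -> R) : quadL E r x = laplacian_form x x.
Proof. by []. Qed.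

Lemma quadL_shift (x y : V -> R) (c : R) :
  quadL E r (fun v => x v + c * y v) =
  quadL E r x + 2 * c * laplacian_form x y + c ^+ 2 * quadL E r y.
Proof.
rewrite !quadLE /laplacian_form.
rewrite (eq_edge_sum (G2 := fun k l =>
  ((x k - x l) * (x k - x l) / r k l + (2 * c) * ((x k - x l) * (y k - y l) / r k l))
  + c ^+ 2 * ((y k - y l) * (y k - y l) / r k l))); last by move=> k l _; ring.
by rewrite !edge_sumD !edge_sumZ; ring.
Qed.

Lemma laplacian_form_sum (x : V -> R) (c : R) (I : finType) (P : pred I)
    (a : I -> R) (g : I -> V -> R) :
  laplacian_form x (fun v => c + \sum_(i | P i) a i * g i v) =
  \sum_(i | P i) a i * laplacian_form x (g i).
Proof.
rewrite /laplacian_form (eq_edge_sum (G2 := fun k l =>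
  \sum_(i | P i) a i * ((x k - x l) * (g i k - g i l) / r k l))); last first.
  move=> k l _; rewrite opprD addrACA subrr add0r -sumrB mulr_sumr mulr_suml.
  by apply: eq_bigr => i _; ring.
by rewrite edge_sum_sum mulr_suml; apply: eq_bigr => i _; rewrite edge_sumZ mulrA.
Qed.

Lemma edge_sum_cut (C : {set V}) (F : V -> V -> R) :
  (forall k l, E k l -> F l k = - F k l) ->
  edge_sum (fun k l => F k l * (indicator C k - indicator C l)) =
  2 * \sum_(k in C) \sum_(l in ~: C | E k l) F k l.
Proof.
move=> F_anti.
pose H k l := F k l * indicator C k * (1 - indicator C l).
rewrite (eq_edge_sum (G2 := fun k l => H k l + H l k)); last first.
  move=> k l Ekl; rewrite /H (F_anti _ _ Ekl) /indicator.
  by case: (k \in C); case: (l \in C); ring.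
rewrite edge_sumD (edge_sum_swap (fun k l => H l k)) /=.
have -> : edge_sum (fun k l => H k l) = \sum_(k in C) \sum_(l in ~: C | E k l) F k l.
  rewrite /edge_sum [RHS]big_mkcond; apply: eq_bigr => k _.
  rewrite /H /indicator; case: (k \in C); last by rewrite big1 // => l _; ring.
  rewrite big_mkcond [RHS]big_mkcond; apply: eq_bigr => l _.
  by rewrite inE; case: (l \in C); case: (E k l) => /=; ring.
ring.
Qed.

Lemma laplacian_form_indicator (x : V -> R) (C : {set V}) :
  laplacian_form x (indicator C) = fC E r x C.
Proof.
rewrite /laplacian_form (eq_edge_sum (G2 := fun k l =>
  ((x k - x l) / r k l) * (indicator C k - indicator C l))); last first.
  by move=> k l _; rewrite mulrAC.
rewrite edge_sum_cut; first by rewrite /fC; field.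
by move=> k l Ekl; rewrite (rsym Ekl) -mulNr opprB.
Qed.

Definition conductance (C : {set V}) : R :=
  \sum_(k in C) \sum_(l in ~: C | E k l) (r k l)^-1.

Lemma RCE (C : {set V}) : RC E r C = (conductance C)^-1.
Proof. by []. Qed.

Lemma quadL_indicator (C : {set V}) : quadL E r (indicator C) = conductance C.
Proof.
rewrite quadLE laplacian_form_indicator /fC /conductance.
apply: eq_bigr => k kC; apply: eq_bigr => l /andP [lC _].
by rewrite /indicator kC; rewrite inE in lC; rewrite (negbTE lC) subr0 mul1r.
Qed.

Variable b : V -> R.

Lemma bC_indicator (C : {set V}) : bC b C = \sum_v b v * indicator C v.
Proof.
rewrite /bC big_mkcond; apply: eq_bigr => v _; rewrite /indicator.
by case: (v \in C); rewrite ?mulr1 ?mulr0.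
Qed.

Lemma Bfun_shift (x y : V -> R) (c : R) :
  Bfun E r b (fun v => x v + c * y v) =
  Bfun E r b x + c * (\sum_v b v * y v) - c * laplacian_form x y
  - c ^+ 2 / 2 * quadL E r y.
Proof.
rewrite /Bfun quadL_shift.
under eq_bigr do rewrite mulrDr mulrCA.
by rewrite big_split /= -mulr_sumr; field.
Qed.

Lemma Bfun0 : Bfun E r b (fun _ => 0) = 0.
Proof.
have quadL0 : quadL E r (fun _ => 0) = 0.
  rewrite /quadL big1 ?mul0r // => k _; rewrite big1 // => l _.
  by rewrite subrr expr0n /= mul0r.
by rewrite /Bfun quadL0 big1 ?mul0r ?subr0 // => v _; rewrite mulr0.
Qed.

End LaplacianForm.

Section RootedTree.
Variables (V : finType) (root : V) (parent : V -> V).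
Hypothesis parent_root : parent root = root.
Hypothesis parent_reach_root : forall v, exists n, iter n parent v = root.

Definition descendant (i v : V) : Prop := exists n, iter n parent v = i.

Lemma iter_parent_root n : iter n parent root = root.
Proof. by elim: n => //= n ->. Qed.

Lemma root_not_descendant i : i != root -> ~ descendant i root.
Proof. by move=> i_neq [n]; rewrite iter_parent_root => /eqP; rewrite eq_sym (negbTE i_neq). Qed.

Lemma parent_not_descendant i : i != root -> ~ descendant i (parent i).
Proof.
move=> i_neq [n iter_i]; have cycle_i : iter n.+1 parent i = i by rewrite iterSr.
have cycle_m m : iter (m * n.+1) parent i = i.
  by elim: m => // m IH; rewrite mulSn iterD IH cycle_i.
have [m iter_m] := parent_reach_root i.
have le_m : (m <= m * n.+1)%N by rewrite leq_pmulr.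
move: (cycle_m m); rewrite -(subnK le_m) iterD iter_m iter_parent_root => /eqP.
by rewrite eq_sym (negbTE i_neq).
Qed.

Lemma parent_parent_neq i : i != root -> parent (parent i) != i.
Proof. by move=> i_neq; apply/eqP => pp_i; apply: (parent_not_descendant i_neq); exists 1%N. Qed.

Local Notation C i := (Ctree root parent i).

Definition cut_tree_rel (i : V) : rel V := fun u w => treeAdj root parent u w &&
  ~~ (((u == i) && (w == parent i)) || ((u == parent i) && (w == i))).

Lemma mem_Ctree i v : (v \in C i) = connect (cut_tree_rel i) i v.
Proof. by rewrite inE. Qed.

Lemma descendant_cut_tree_rel i u w :
  descendant i u -> cut_tree_rel i u w -> descendant i w.
Proof.
move=> [n iter_u] /andP [/orP [/andP [_ /eqP pu]|/andP [_ /eqP pw]] not_cut].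
- case: n iter_u => [|n] iter_u; last by exists n; rewrite -pu -iterSr.
  by move: not_cut; rewrite -pu -iter_u !eqxx.
- by exists n.+1; rewrite iterSr pw.
Qed.

Lemma mem_Ctree_descendant i v : v \in C i -> descendant i v.
Proof.
rewrite mem_Ctree => /connectP [s path_s ->].
suff walk u : descendant i u -> path (cut_tree_rel i) u s -> descendant i (last u s).
  by apply: walk path_s; exists 0%N.
elim: s {path_s} u => [|w s IH] u //= desc_u /andP [uw path_s].
exact: IH (descendant_cut_tree_rel desc_u uw) path_s.
Qed.

Lemma Ctree_self i : i \in C i.
Proof. by rewrite mem_Ctree connect0. Qed.

Lemma Ctree_parent i : i != root -> parent i \notin C i.
Proof. by move=> i_neq; apply/negP => /mem_Ctree_descendant; apply: parent_not_descendant. Qed.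

Lemma Ctree_root i : i != root -> root \notin C i.
Proof. by move=> i_neq; apply/negP => /mem_Ctree_descendant; apply: root_not_descendant. Qed.

Lemma mem_Ctree_parent i v : i != root -> v != root -> v != i ->
  (parent v \in C i) = (v \in C i).
Proof.
move=> i_neq v_neq v_neq_i.
have not_cut : ~~ ((v == parent i) && (parent v == i)).
  apply/negP => /andP [/eqP v_pi /eqP pv_i].
  by move: (parent_parent_neq i_neq); rewrite -v_pi pv_i eqxx.
have up : cut_tree_rel i v (parent v).
  by rewrite /cut_tree_rel /treeAdj v_neq eqxx (negbTE v_neq_i).
have down : cut_tree_rel i (parent v) v.
  by rewrite /cut_tree_rel /treeAdj v_neq eqxx orbT /= (negbTE v_neq_i) andbF orbF andbC.
rewrite !mem_Ctree; apply/idP/idP => conn_i.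
- exact: connect_trans conn_i (connect1 down).
- exact: connect_trans conn_i (connect1 up).
Qed.

Variable R : ringType.

Lemma tree_telescope (y : V -> R) v :
  y v = y root + \sum_(i | i != root) (y i - y (parent i)) * indicator (C i) v.
Proof.
have at_root : \sum_(i | i != root) (y i - y (parent i)) * indicator (C i) root = 0.
  by rewrite big1 // => i i_neq; rewrite /indicator (negbTE (Ctree_root i_neq)) mulr0.
have [n] := parent_reach_root v; elim: n v => [|n IH] v.
  by move=> /= ->; rewrite at_root addr0.
have [-> _|v_neq] := eqVneq v root; first by rewrite at_root addr0.
rewrite iterSr => /IH y_parent.
rewrite (bigD1 v) //= /indicator Ctree_self mulr1.
rewrite (bigD1 v) //= /indicator (negbTE (Ctree_parent v_neq)) mulr0 add0r in y_parent.
under [in X in _ = _ + (_ + X)]eq_bigr => i /andP [i_neq v_neq_i].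
  rewrite -(mem_Ctree_parent i_neq v_neq); last by rewrite eq_sym.
  over.
by rewrite addrCA -y_parent subrK.
Qed.

Lemma treeAdj_sum (M : nmodType) (G : V -> V -> M) :
  \sum_k \sum_(l | treeAdj root parent k l) G k l =
  \sum_(i | i != root) (G i (parent i) + G (parent i) i).
Proof.
pose up k l := if (k != root) && (parent k == l) then G k l else 0.
pose down k l := if (l != root) && (parent l == k) then G k l else 0.
have split_adj k :
    \sum_(l | treeAdj root parent k l) G k l = \sum_l up k l + \sum_l down k l.
  rewrite -big_split big_mkcond; apply: eq_bigr => l _; rewrite /up /down /treeAdj.
  case: (boolP ((k != root) && _)) => [/andP [k_neq /eqP pk]|_];
    case: (boolP ((l != root) && _)) => [/andP [_ /eqP pl]|_] //=;
    rewrite ?addr0 ?add0r //.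
  by move: (parent_parent_neq k_neq); rewrite pk pl eqxx.
have sum_up k : \sum_l up k l = if k != root then G k (parent k) else 0.
  rewrite /up; case: (k != root) => /=; last by rewrite big1.
  by rewrite -big_mkcond (big_pred1 (parent k)) // => l; rewrite /= eq_sym.
have sum_down l : \sum_k down k l = if l != root then G (parent l) l else 0.
  rewrite /down; case: (l != root) => /=; last by rewrite big1.
  by rewrite -big_mkcond (big_pred1 (parent l)) // => k; rewrite /= eq_sym.
rewrite (eq_bigr _ (fun k _ => split_adj k)) big_split /=.
rewrite (eq_bigr _ (fun k _ => sum_up k)) exchange_big (eq_bigr _ (fun l _ => sum_down l)) /=.
by rewrite -big_split /= [RHS]big_mkcond; apply: eq_bigr => i _; case: (i != root); rewrite ?addr0.
Qed.

End RootedTree.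

Lemma one_sub_inv_exprn_le (R : realType) (t eps : R) (K : nat) :
  1 <= t -> 0 < eps -> t * ln eps^-1 <= K%:R -> (1 - t^-1) ^+ K <= eps.
Proof.
move=> t_ge1 eps_gt0 K_ge.
have t_gt0 : 0 < t by apply: lt_le_trans t_ge1.
have tV_ge0 : 0 <= t^-1 by rewrite invr_ge0 ltW.
have eps_pos : eps \in Num.pos by rewrite posrE.
apply: (@le_trans _ _ (expR (- t^-1) ^+ K)).
  apply: lerXn2r; rewrite ?nnegrE ?expR_ge0 ?subr_ge0 ?invf_le1 //.
  exact: expR_ge1Dx.
rewrite -expRM_natl -[leRHS](lnK eps_pos) ler_expR.
rewrite (lnV eps_pos) in K_ge.
have := ler_wpM2l tV_ge0 K_ge; rewrite mulrA mulVf ?gt_eqF // mul1r; nra.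
Qed.

Lemma young_mul_le (R : realFieldType) (rho a d : R) :
  0 < rho -> a * d - a ^+ 2 / rho / 2 <= rho * d ^+ 2 / 2.
Proof.
move=> rho_gt0; rewrite -subr_ge0.
have -> : rho * d ^+ 2 / 2 - (a * d - a ^+ 2 / rho / 2) = (rho * d - a) ^+ 2 / (2 * rho).
  by field; rewrite gt_eqF.
by rewrite divr_ge0 ?sqr_ge0 // mulr_ge0 // ltW.
Qed.

Section DualKOSZ.
Variables (R : realType) (V : finType) (E : rel V) (r : V -> V -> R) (b : V -> R).
Variables (root : V) (parent : V -> V).
Hypothesis Esym : forall u v, E u v = E v u.
Hypothesis rsym : forall u v, E u v -> r u v = r v u.
Hypothesis r_gt0 : forall u v, E u v -> 0 < r u v.
Hypothesis b_sum0 : \sum_v b v = 0.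
Hypothesis parent_root : parent root = root.
Hypothesis parent_edge : forall v, v != root -> E v (parent v).
Hypothesis parent_reach_root : forall v, exists n, iter n parent v = root.

Local Notation B := (Bfun E r b).
Local Notation C i := (Ctree root parent i).
Local Notation step := (kosz_step E r b root parent).
Local Notation tau := (tau E r root parent).
Local Notation p := (prob E r root parent).

Definition deficit (x : V -> R) (i : V) : R := bC b (C i) - fC E r x (C i).

Lemma parent_res_gt0 i : i != root -> 0 < r i (parent i).
Proof. by move/parent_edge; apply: r_gt0. Qed.

Lemma conductance_Ctree_ge i : i != root -> (r i (parent i))^-1 <= conductance E r (C i).
Proof.
move=> i_neq; rewrite /conductance (bigD1 i) ?Ctree_self //= (bigD1 (parent i)) /=; last first.
  by rewrite inE (Ctree_parent parent_root parent_reach_root) // parent_edge.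
have rest_ge0 : 0 <= \sum_(l | (l \in ~: C i) && E i l && (l != parent i)) (r i l)^-1.
  by apply: sumr_ge0 => l /andP [/andP [_ Eil] _]; rewrite invr_ge0 ltW // r_gt0.
have others_ge0 : 0 <= \sum_(k in C i | k != i) \sum_(l in ~: C i | E k l) (r k l)^-1.
  apply: sumr_ge0 => k _; apply: sumr_ge0 => l /andP [_ Ekl].
  by rewrite invr_ge0 ltW // r_gt0.
lra.
Qed.

Lemma conductance_Ctree_gt0 i : i != root -> 0 < conductance E r (C i).
Proof.
move=> i_neq; apply: lt_le_trans (conductance_Ctree_ge i_neq).
by rewrite invr_gt0 parent_res_gt0.
Qed.

Lemma Bfun_kosz_step x i : i != root ->
  B (step x i) = B x + RC E r (C i) * deficit x i ^+ 2 / 2.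
Proof.
move=> i_neq; have cond_neq0 := lt0r_neq0 (conductance_Ctree_gt0 i_neq).
have -> : step x i = fun v => x v + (deficit x i * RC E r (C i)) * indicator (C i) v by [].
rewrite Bfun_shift -bC_indicator laplacian_form_indicator // quadL_indicator // RCE.
by rewrite /deficit; field.
Qed.

Lemma sum_b_sub_laplacian_form x y :
  \sum_v b v * y v - laplacian_form E r x y =
  \sum_(i | i != root) (y i - y (parent i)) * deficit x i.
Proof.
pose a i := y i - y (parent i).
have y_tele : y = fun v => y root + \sum_(i | i != root) a i * indicator (C i) v.
  by apply/funext => v; apply: (tree_telescope parent_root parent_reach_root).
rewrite [in laplacian_form _ _ _ _]y_tele laplacian_form_sum.
rewrite [in \sum_v _]y_tele.
under eq_bigr do rewrite mulrDr mulr_sumr.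
rewrite big_split /= -mulr_suml b_sum0 mul0r add0r exchange_big -sumrB.
apply: eq_bigr => i _; rewrite laplacian_form_indicator // /deficit bC_indicator mulrBr.
by congr (_ - _); rewrite mulr_sumr; apply: eq_bigr => v _; rewrite /a; ring.
Qed.

Lemma tree_energy_le y :
  \sum_(i | i != root) (y i - y (parent i)) ^+ 2 / r i (parent i) <= quadL E r y.
Proof.
pose g k l := (y k - y l) ^+ 2 / r k l.
have g_ge0 k l : E k l -> 0 <= g k l.
  by move=> Ekl; rewrite /g divr_ge0 ?sqr_ge0 // ltW // r_gt0.
have tree_le : \sum_k \sum_(l | treeAdj root parent k l) g k l <= edge_sum E g.
  apply: ler_sum => k _; rewrite big_mkcond [leRHS]big_mkcond.
  apply: ler_sum => l _; case: ifP => [/orP [/andP [k_neq /eqP <-]|/andP [l_neq /eqP <-]]|_].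
  - by rewrite parent_edge.
  - by rewrite Esym parent_edge.
  - by case: ifP => // Ekl; apply: g_ge0.
rewrite (treeAdj_sum parent_root parent_reach_root) in tree_le.
have -> : quadL E r y = edge_sum E g / 2 by [].
have both_ways : \sum_(i | i != root) (g i (parent i) + g (parent i) i) =
    2 * \sum_(i | i != root) g i (parent i).
  rewrite mulr_sumr; apply: eq_bigr => i i_neq.
  by rewrite /g (rsym (parent_edge i_neq)) -sqrrN opprB; ring.
rewrite both_ways in tree_le; rewrite /g in tree_le *; lra.
Qed.

Lemma Bfun_gap_le x z :
  B z - B x <= \sum_(i | i != root) r i (parent i) * deficit x i ^+ 2 / 2.
Proof.
pose y v := z v - x v.
have -> : z = fun v => x v + 1 * y v by apply/funext => v; rewrite /y; ring.
have edge_le : \sum_(i | i != root) ((y i - y (parent i)) * deficit x i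
      - (y i - y (parent i)) ^+ 2 / r i (parent i) / 2)
    <= \sum_(i | i != root) r i (parent i) * deficit x i ^+ 2 / 2.
  by apply: ler_sum => i i_neq; apply: young_mul_le; apply: parent_res_gt0.
rewrite sumrB -sum_b_sub_laplacian_form -[X in _ - X <= _]mulr_suml in edge_le.
rewrite Bfun_shift !mul1r expr1n; have := tree_energy_le y; lra.
Qed.

Lemma tauE : tau = \sum_(i | i != root) r i (parent i) * conductance E r (C i).
Proof. by apply: eq_bigr => i _; rewrite RCE invrK. Qed.

Section NonTrivialTree.
Variable i0 : V.
Hypothesis i0_neq_root : i0 != root.

Lemma tau_ge1 : 1 <= tau.
Proof.
rewrite tauE (bigD1 i0) //=.
have rest_ge0 : 0 <= \sum_(i | (i != root) && (i != i0)) r i (parent i) * conductance E r (C i).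
  apply: sumr_ge0 => i /andP [i_neq _].
  by rewrite mulr_ge0 // ltW ?conductance_Ctree_gt0 ?parent_res_gt0.
have := ler_wpM2l (ltW (parent_res_gt0 i0_neq_root)) (conductance_Ctree_ge i0_neq_root).
rewrite mulfV ?gt_eqF ?parent_res_gt0 //; lra.
Qed.

Lemma tau_gt0 : 0 < tau.
Proof. exact: lt_le_trans tau_ge1. Qed.

Lemma prob_ge0 i : i != root -> 0 <= p i.
Proof.
move=> i_neq; rewrite /prob RCE invrK.
by rewrite !mulr_ge0 ?invr_ge0 ?ltW ?tau_gt0 ?conductance_Ctree_gt0 ?parent_res_gt0.
Qed.

Lemma prob_sum1 : \sum_(i | i != root) p i = 1.
Proof. by rewrite /prob -mulr_sumr mulVf // gt_eqF // tau_gt0. Qed.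

Lemma prob_sum_sub (c : R) (f : V -> R) :
  \sum_(i | i != root) p i * (c - f i) = c - \sum_(i | i != root) p i * f i.
Proof. by under eq_bigr do rewrite mulrBr; rewrite sumrB -mulr_suml prob_sum1 mul1r. Qed.

Lemma expected_Bfun_kosz_step x :
  \sum_(i | i != root) p i * B (step x i) =
  B x + tau^-1 * \sum_(i | i != root) r i (parent i) * deficit x i ^+ 2 / 2.
Proof.
have tau_neq0 := lt0r_neq0 tau_gt0.
have -> : B x = \sum_(i | i != root) p i * B x by rewrite -mulr_suml prob_sum1 mul1r.
rewrite mulr_sumr -big_split /=.
apply: eq_bigr => i i_neq; have cond_neq0 := lt0r_neq0 (conductance_Ctree_gt0 i_neq).
by rewrite Bfun_kosz_step // /prob !RCE invrK; field; rewrite tau_neq0.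
Qed.

Lemma expected_gap_contract z x :
  B z - \sum_(i | i != root) p i * B (step x i) <= (1 - tau^-1) * (B z - B x).
Proof.
rewrite expected_Bfun_kosz_step.
have tauV_ge0 : 0 <= tau^-1 by rewrite invr_ge0 ltW // tau_gt0.
have := ler_wpM2l tauV_ge0 (Bfun_gap_le x z); lra.
Qed.

Lemma expB_gap_le z n x :
  B z - expB E r b root parent n x <= (1 - tau^-1) ^+ n * (B z - B x).
Proof.
have q_ge0 : 0 <= 1 - tau^-1 by rewrite subr_ge0 invf_le1 ?tau_gt0 ?tau_ge1.
elim: n x => [|n IH] x; first by rewrite expr0 mul1r.
rewrite /= -prob_sum_sub.
apply: le_trans (_ : _ <= \sum_(i | i != root) p i *
    ((1 - tau^-1) ^+ n * (B z - B (step x i)))) _.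
  by apply: ler_sum => i i_neq; apply: ler_wpM2l; [exact: prob_ge0 | exact: IH].
under eq_bigr do rewrite mulrCA.
rewrite -mulr_sumr prob_sum_sub exprSr -mulrA.
by apply: ler_wpM2l; [exact: exprn_ge0 | exact: expected_gap_contract].
Qed.

End NonTrivialTree.

Lemma Bfun_le0_of_single_vertex : (forall i, i == root) -> forall x, B x <= 0.
Proof.
move=> only_root x; rewrite -(Bfun0 E r b).
have := Bfun_gap_le (fun _ => 0) x.
by rewrite big_pred0 => [|i]; rewrite ?subr_le0 // only_root.
Qed.

End DualKOSZ.

Theorem mainTheorem13 (R : realType) (V : finType)
  (E : rel V) (r : V -> V -> R) (b : V -> R) (root : V) (parent : V -> V)
  (xstar : V -> R) (eps : R) (K : nat) :
  (* G is a connected undirected (simple) graph with positive resistances *)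
  (forall u v, E u v = E v u) ->
  (forall u, ~~ E u u) ->
  (forall u v, E u v -> r u v = r v u) ->
  (forall u v, E u v -> 0 < r u v) ->
  (forall u v, connect E u v) ->
  (* b sums to zero *)
  \sum_(v : V) b v = 0 ->
  (* T is a spanning tree of G rooted at root, edges (v, parent v) toward root *)
  parent root = root ->
  (forall v, v != root -> E v (parent v)) ->
  (forall v, exists n, iter n parent v = root) ->
  (* xstar maximizes B *)
  (forall x, Bfun E r b x <= Bfun E r b xstar) ->
  0 < eps ->
  tau E r root parent * ln (eps^-1) <= K%:R ->
  Bfun E r b xstar - expB E r b root parent K (fun _ => 0)
    <= eps * Bfun E r b xstar.
Proof.
move=> Esym _ rsym r_gt0 _ b_sum0 parent_root parent_edge parent_reach_root
  xstar_max eps_gt0 K_ge.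
have Bstar_ge0 : 0 <= Bfun E r b xstar by have := xstar_max (fun _ => 0); rewrite Bfun0.
have [i0 i0_neq | only_root] := pickP (fun i => i != root).
  apply: le_trans (expB_gap_le Esym rsym r_gt0 b_sum0 parent_root parent_edge
                     parent_reach_root i0_neq xstar K (fun _ => 0)) _.
  rewrite Bfun0 subr0; apply: ler_wpM2r => //; apply: one_sub_inv_exprn_le => //.
  exact: tau_ge1 r_gt0 parent_root parent_edge parent_reach_root i0 i0_neq.
have {}only_root i : i == root by move/negbFE: (only_root i).
have Bstar0 : Bfun E r b xstar = 0.
  apply: le_anti; rewrite Bstar_ge0 andbT.
  exact: Bfun_le0_of_single_vertex Esym rsym r_gt0 b_sum0 parent_root parent_edge
    parent_reach_root only_root _.
rewrite Bstar0 mulr0 subr_le0; case: K K_ge => [|K] _ /=; first by rewrite Bfun0.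
by rewrite big_pred0 // => i; rewrite only_root.
Qed.
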